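(* Let $n\ge2$, $h=0$, $\epsilon\in[-1,1]$. If $n$ is even, let $C^*=C(\tfrac n2,0,0)\cup C(0,\tfrac n2,0)\cup C(n,\tfrac n2,\tfrac n2)\cup C(\tfrac n2,n,\tfrac n2)$. If $n$ is odd, let $C^*=C(\tfrac{n+1}2,0,0)\cup C(0,\tfrac{n+1}2,0)\cup C(n,\tfrac{n-1}2,\tfrac{n-1}2)\cup C(\tfrac{n-1}2,n,\tfrac{n-1}2)$ when $\epsilon\ge0$, and $C^*=C(\tfrac{n-1}2,0,0)\cup C(0,\tfrac{n-1}2,0)\cup C(n,\tfrac{n+1}2,\tfrac{n+1}2)\cup C(\tfrac{n+1}2,n,\tfrac{n+1}2)$ when $\epsilon<0$. Then for any distinct $s_1,s_2\in\mathcal X_s$, the set $C^*$ is a gate for the transition from $s_1$ to $s_2$.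
   Context: Setup. Fix an integer $n\ge2$, $\epsilon\in[-1,1]$, $h\in[0,1]$. The graph $\mathcal G(2,n)$ has vertex set $V=V^{(1)}\cup V^{(2)}$ with $V^{(1)}=\{1,\dots,n\}$, $V^{(2)}=\{n+1,\dots,2n\}$; its edge set is $E=E_{\mathrm{int}}\cup E_{\mathrm{cross}}$, where $E_{\mathrm{int}}$ consists of all pairs of distinct vertices in the same $V^{(k)}$ and $E_{\mathrm{cross}}=\{\{i,i+n\}:1\le i\le n\}$. The configuration space is $\mathcal X=\{-1,+1\}^V$ and $H(\sigma)=-\sum_{\{i,j\}\in E_{\mathrm{int}}}\sigma_i\sigma_j-\epsilon\sum_{\{i,j\}\in E_{\mathrm{cross}}}\sigma_i\sigma_j-h\sum_{i\in V}\sigma_i$. For integers $0\le p_1,p_2\le n$ and $a$, $C(p_1,p_2,a)$ is the set of configurations with exactly $p_1$ vertices of spin $+1$ in $V^{(1)}$, exactly $p_2$ vertices of spin $+1$ in $V^{(2)}$, and exactly $a$ cross-edges both of whose endpoints have spin $+1$. $\mathbf{+1},\mathbf{-1}$ are the all-plus and all-minus configurations; $\mathbf{\pm1}$ equals $+1$ on $V^{(1)}$ and $-1$ on $V^{(2)}$, $\mathbf{\mp1}$ the reverse. The stable states $\mathcal X_s$ are the global minimizers of $H$. Paths and gates. Two configurations are neighbours if they differ at exactly one vertex; a path is a finite sequence of configurations with consecutive ones neighbours. $\Phi(\eta,\eta')=\min_{\omega:\eta\to\eta'}\max_{\zeta\in\omega}H(\zeta)$. The optimal paths $(\eta\to\eta')_{opt}$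 are the paths from $\eta$ to $\eta'$ with $\max_{\xi\in\omega}H(\xi)=\Phi(\eta,\eta')$. The minimal saddles $\mathcal S(\eta,\eta')$ are the configurations $\zeta$ lying on some optimal path $\omega$ with $H(\zeta)=\max_{\xi\in\omega}H(\xi)$. A set $\mathcal W$ is a gate for the transition $\eta\to\eta'$ if $\mathcal W\subseteq\mathcal S(\eta,\eta')$ and every optimal path from $\eta$ to $\eta'$ intersects $\mathcal W$. *)

From HB Require Import structures.
From mathcomp Require Import all_boot all_order all_algebra.
Set Implicit Arguments. Unset Strict Implicit. Unset Printing Implicit Defensive.
Import Order.TTheory GRing.Theory Num.Theory.

(* Vertices: 'I_(n+n).  V^(1) = {lshift n i | i < n} (values 0..n-1),
   V^(2) = {rshift n i | i < n} (values n..2n-1).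
   Configurations: boolean functions, true = spin +1, false = spin -1. *)
Definition conf (n : nat) := {ffun 'I_(n + n) -> bool}.

Definition spin (R : nzRingType) (b : bool) : R := if b then 1%R else (-1)%R.

Section Model.
Variables (R : realFieldType) (n : nat) (eps h : R).
Local Open Scope ring_scope.

(* internal edges: pairs {i,j}, i<j, in the same block; cross edges: {i, i+n} *)
Definition Ham (s : conf n) : R :=
  - (\sum_(i : 'I_(n + n)) \sum_(j : 'I_(n + n) |
        ((i < j)%N && ((i < n)%N == (j < n)%N)))
        spin R (s i) * spin R (s j))
  - eps * (\sum_(i < n) spin R (s (lshift n i)) * spin R (s (rshift n i)))
  - h * (\sum_(i : 'I_(n + n)) spin R (s i)).

Definition nbr (s t : conf n) : bool := #|[set v | s v != t v]| == 1%N.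

Definition is_path (eta eta' : conf n) (p : seq (conf n)) : Prop :=
  path nbr eta p /\ last eta p = eta'.

Definition path_max (eta : conf n) (p : seq (conf n)) : R :=
  foldr (fun z m => Num.max (Ham z) m) (Ham eta) p.

Definition opt_path (eta eta' : conf n) (p : seq (conf n)) : Prop :=
  is_path eta eta' p /\
  forall q, is_path eta eta' q -> path_max eta p <= path_max eta q.

Definition min_saddle (eta eta' : conf n) (z : conf n) : Prop :=
  exists p, opt_path eta eta' p /\ z \in eta :: p /\ Ham z = path_max eta p.

Definition is_gate (eta eta' : conf n) (W : conf n -> Prop) : Prop :=
  (forall z, W z -> min_saddle eta eta' z) /\
  (forall p, opt_path eta eta' p -> exists2 z, z \in eta :: p & W z).

Definition stable (s : conf n) : Prop := forall t, Ham s <= Ham t.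
End Model.

Section Classes.
Variables (n : nat).
Definition inC (p1 p2 a : nat) (s : conf n) : Prop :=
  #|[set i : 'I_n | s (lshift n i)]| = p1 /\
  #|[set i : 'I_n | s (rshift n i)]| = p2 /\
  #|[set i : 'I_n | s (lshift n i) && s (rshift n i)]| = a.
End Classes.

Definition Cstar (R : realFieldType) (n : nat) (eps : R) (s : conf n) : Prop :=
  if ~~ odd n then
    inC (n./2) 0 0 s \/ inC 0 (n./2) 0 s \/
    inC n (n./2) (n./2) s \/ inC (n./2) n (n./2) s
  else if (0 <= eps)%R then
    (* (n+1)/2 = n.+1./2 , (n-1)/2 = n./2 *)
    inC (n.+1./2) 0 0 s \/ inC 0 (n.+1./2) 0 s \/
    inC n (n./2) (n./2) s \/ inC (n./2) n (n./2) s
  else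
    inC (n./2) 0 0 s \/ inC 0 (n./2) 0 s \/
    inC n (n.+1./2) (n.+1./2) s \/ inC (n.+1./2) n (n.+1./2) s.

From HB Require Import structures.
From mathcomp Require Import all_boot all_order all_algebra.
From mathcomp Require Import zify ring lra.
From Stdlib Require Import Classical.
Import Order.TTheory GRing.Theory Num.Theory.
Set Implicit Arguments. Unset Strict Implicit. Unset Printing Implicit Defensive.
Local Open Scope ring_scope.

(* 1. For h = 0 the energy of a configuration depends only on its counts
      p1, p2 (plus spins in each block) and a (plus-plus cross edges):
      Ham_counts expresses it through the quadratic function energy.
   2. Let Phi be the common energy of the configurations of C* (crit_energy).
      Every edge configuration, i.e. one constant on a block, has energy at
      most Phi (edge_energy); flipping spins one at a time inside the box
      spanned by two edge configurations therefore joins them below Phi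
      (box_conn, edge_conn).
   3. Stable states are constant on both blocks (stable_corner), so two
      distinct ones differ in their phase: the pair of sides of n/2 on which
      p1 and p2 lie (stable_phase_inj).
   4. A spin flip moves p1 or p2 by one; if it changes the phase while both
      endpoints stay below Phi, one endpoint belongs to C* (crossing_counts).
      So a path from s1 to s2 below Phi meets C* (low_path_meets_Cstar).
   5. Together: the communication height between s1 and s2 is Phi, every
      optimal path meets C*, and each point of C* lies on an optimal path. *)

Lemma card_flip (T : finType) (f g : T -> bool) i :
  f i != g i -> (forall j, j != i -> f j = g j) ->
  #|[set j | f j]| = #|[set j | g j]|.+1 \/ #|[set j | g j]| = #|[set j | f j]|.+1.
Proof.
move=> hi hj.
have same_off_i : forall j, (j \in [set j | f j] :\ i) = (j \in [set j | g j] :\ i).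
  by move=> j; rewrite !inE; case: (eqVneq j i) => //= /hj ->.
have card_split (h : T -> bool) : #|[set j | h j]| = (h i + #|[set j | h j] :\ i|)%N.
  by rewrite (cardsD1 i) inE.
rewrite (card_split f) (card_split g) (eq_card same_off_i).
by move: hi; case: (f i); case: (g i) => //= _; [left|right].
Qed.

Section Counts.
Variable n : nat.

Definition plus1 (s : conf n) : nat := #|[set i : 'I_n | s (lshift n i)]|.
Definition plus2 (s : conf n) : nat := #|[set i : 'I_n | s (rshift n i)]|.
Definition plus12 (s : conf n) : nat :=
  #|[set i : 'I_n | s (lshift n i) && s (rshift n i)]|.

Definition valid_counts (p1 p2 a : nat) : bool :=
  [&& (a <= p1)%N, (a <= p2)%N, (p1 <= n)%N, (p2 <= n)%N & (p1 + p2 <= n + a)%N].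

Lemma counts_valid (s : conf n) : valid_counts (plus1 s) (plus2 s) (plus12 s).
Proof.
have eI : [set i : 'I_n | s (lshift n i) && s (rshift n i)] =
          [set i | s (lshift n i)] :&: [set i | s (rshift n i)].
  by apply/setP => i; rewrite !inE.
have card_le_n (A : {set 'I_n}) : (#|A| <= n)%N.
  by rewrite -[X in (_ <= X)%N]card_ord max_card.
apply/and5P; split; rewrite /plus1 /plus2 /plus12 ?card_le_n //.
- by apply: subset_leq_card; apply/subsetP => i; rewrite !inE => /andP[].
- by apply: subset_leq_card; apply/subsetP => i; rewrite !inE => /andP[].
- by rewrite -cardsUI eI leq_add2r card_le_n.
Qed.

Lemma valid_counts_sym p1 p2 a : valid_counts p1 p2 a = valid_counts p2 p1 a.
Proof. by rewrite /valid_counts; apply/and5P/and5P => [] [*]; split => //; lia. Qed.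

Definition const1 (s : conf n) (b : bool) : Prop := forall i, s (lshift n i) = b.
Definition const2 (s : conf n) (b : bool) : Prop := forall i, s (rshift n i) = b.

Lemma const1_counts (s : conf n) b : const1 s b ->
  if b then plus1 s = n /\ plus12 s = plus2 s else plus1 s = 0%N /\ plus12 s = 0%N.
Proof.
case: b => h; split; rewrite /plus1 /plus2 /plus12.
- by rewrite -[RHS]card_ord; apply: eq_card => i; rewrite inE h.
- by apply: eq_card => i; rewrite !inE h.
- by apply/eqP; rewrite cards_eq0; apply/eqP/setP => i; rewrite !inE h.
- by apply/eqP; rewrite cards_eq0; apply/eqP/setP => i; rewrite !inE h.
Qed.

Lemma const2_counts (s : conf n) b : const2 s b ->
  if b then plus2 s = n /\ plus12 s = plus1 s else plus2 s = 0%N /\ plus12 s = 0%N.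
Proof.
case: b => h; split; rewrite /plus1 /plus2 /plus12.
- by rewrite -[RHS]card_ord; apply: eq_card => i; rewrite inE h.
- by apply: eq_card => i; rewrite !inE h andbT.
- by apply/eqP; rewrite cards_eq0; apply/eqP/setP => i; rewrite !inE h.
- by apply/eqP; rewrite cards_eq0; apply/eqP/setP => i; rewrite !inE h andbF.
Qed.

Lemma card_extreme (f : 'I_n -> bool) :
  (#|[set i | f i]| = 0%N -> forall i, f i = false) /\
  (#|[set i | f i]| = n -> forall i, f i = true).
Proof.
split => h i.
  by move/eqP: h; rewrite cards_eq0 => /eqP/setP/(_ i); rewrite !inE.
have : [set i | f i] == setT by rewrite eqEcard subsetT cardsT card_ord h leqnn.
by move/eqP/setP/(_ i); rewrite !inE.
Qed.

Lemma plus1_const (s : conf n) :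
  (plus1 s = 0%N -> const1 s false) /\ (plus1 s = n -> const1 s true).
Proof. exact: (card_extreme (fun i => s (lshift n i))). Qed.

Lemma plus2_const (s : conf n) :
  (plus2 s = 0%N -> const2 s false) /\ (plus2 s = n -> const2 s true).
Proof. exact: (card_extreme (fun i => s (rshift n i))). Qed.

Definition block_conf (b1 b2 : bool) : conf n :=
  [ffun v : 'I_(n + n) => if (v < n)%N then b1 else b2].

Lemma lshift_lt (i : 'I_n) : (lshift n i < n)%N.
Proof. by rewrite /= ltn_ord. Qed.

Lemma rshift_ge (i : 'I_n) : (rshift n i < n)%N = false.
Proof. by rewrite /= ltnNge leq_addr. Qed.

Lemma block_conf1 b1 b2 : const1 (block_conf b1 b2) b1.
Proof. by move=> i; rewrite ffunE lshift_lt. Qed.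

Lemma block_conf2 b1 b2 : const2 (block_conf b1 b2) b2.
Proof. by move=> i; rewrite ffunE rshift_ge. Qed.

Lemma vertex_cases (v : 'I_(n + n)) :
  (exists i, v = lshift n i) \/ (exists i, v = rshift n i).
Proof. by rewrite -(splitK v); case: (split v) => i; [left|right]; exists i. Qed.

Lemma nbrP (s t : conf n) :
  nbr s t -> exists v, s v != t v /\ forall w, w != v -> s w = t w.
Proof.
move=> /cards1P [v hv]; exists v; split.
  have : v \in [set v] by rewrite inE.
  by rewrite -hv inE.
move=> w hw; apply/eqP; apply: contraNT hw => hw.
have : w \in [set v | s v != t v] by rewrite inE.
by rewrite hv inE.
Qed.

Lemma flip1_counts (s t : conf n) i :
  s (lshift n i) != t (lshift n i) -> (forall w, w != lshift n i -> s w = t w) ->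
  plus2 s = plus2 t /\ (plus1 s = (plus1 t).+1 \/ plus1 t = (plus1 s).+1).
Proof.
move=> hi hw; split.
  by apply: eq_card => j; rewrite !inE hw // eq_sym eq_lrshift.
apply: (card_flip (f := fun j => s (lshift n j)) (g := fun j => t (lshift n j)) hi).
by move=> j hj; apply: hw; apply: contra hj => /eqP/lshift_inj ->.
Qed.

Lemma flip2_counts (s t : conf n) i :
  s (rshift n i) != t (rshift n i) -> (forall w, w != rshift n i -> s w = t w) ->
  plus1 s = plus1 t /\ (plus2 s = (plus2 t).+1 \/ plus2 t = (plus2 s).+1).
Proof.
move=> hi hw; split.
  by apply: eq_card => j; rewrite !inE hw // eq_lrshift.
apply: (card_flip (f := fun j => s (rshift n j)) (g := fun j => t (rshift n j)) hi).
by move=> j hj; apply: hw; apply: contra hj => /eqP/rshift_inj ->.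
Qed.
End Counts.

Section Energy.
Variable R : realFieldType.

(* The energy (for h = 0) as a function of N = n and of the counts
   K = p1, Q = p2, A = a. *)
Definition energy (N e K Q A : R) : R :=
  - ((2 * K - N) ^+ 2 + (2 * Q - N) ^+ 2) / 2 + N
  - e * (4 * A - 2 * K - 2 * Q + N).

Lemma energy_sym (N e K Q A : R) : energy N e K Q A = energy N e Q K A.
Proof. by rewrite /energy; ring. Qed.

Lemma spinE (b : bool) : spin R b = 2 * (b : nat)%:R - 1.
Proof. by case: b => /=; lra. Qed.

Lemma spin_sq (b : bool) : spin R b * spin R b = 1.
Proof. by case: b; rewrite /= ?mulrNN mulr1. Qed.

Lemma sum_indicator m (f : 'I_m -> bool) :
  \sum_i ((f i : nat)%:R : R) = #|[set i | f i]|%:R.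
Proof.
rewrite -natr_sum -sum1_card [in RHS]big_mkcond /=; congr (_%:R).
by apply: eq_bigr => i _; rewrite inE; case: (f i).
Qed.

Lemma sum_spin m (f : 'I_m -> bool) :
  \sum_i spin R (f i) = 2 * #|[set i | f i]|%:R - m%:R.
Proof.
under eq_bigr do rewrite spinE.
by rewrite sumrB -mulr_sumr sum_indicator sumr_const card_ord.
Qed.

Lemma sum_spin_prod m (f g : 'I_m -> bool) :
  \sum_i spin R (f i) * spin R (g i) =
  4 * #|[set i | f i && g i]|%:R - 2 * #|[set i | f i]|%:R
  - 2 * #|[set i | g i]|%:R + m%:R.
Proof.
rewrite (eq_bigr (fun i => 4 * ((f i && g i : nat)%:R) - 2 * (f i : nat)%:R
   - 2 * (g i : nat)%:R + 1)); last by move=> i _; case: (f i); case: (g i) => /=; lra.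
by rewrite !big_split !sumrN /= -!mulr_sumr !sum_indicator sumr_const card_ord.
Qed.

Lemma sum_sym_pairs (V : zmodType) m (P : rel 'I_m) (F : 'I_m -> 'I_m -> V) :
  symmetric P -> (forall i j, F i j = F j i) -> reflexive P ->
  \sum_(i : 'I_m) \sum_(j | P i j) F i j =
  (\sum_(i : 'I_m) \sum_(j : 'I_m | (i < j)%N && P i j) F i j) *+ 2 + \sum_i F i i.
Proof.
move=> Psym Fsym Prefl.
have split3 (i j : 'I_m) : (if P i j then F i j else 0) =
    (if (i < j)%N && P i j then F i j else 0) +
    (if (j < i)%N && P j i then F j i else 0) + (if j == i then F i j else 0).
  case: (eqVneq j i) => [->|nji]; first by rewrite ltnn Prefl !add0r.
  have : val i != val j by rewrite eq_sym; apply: contraNneq nji => /val_inj ->.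
  case: (ltngtP i j) => // _ _; first by rewrite /= !addr0.
  by rewrite /= add0r addr0 Psym Fsym.
transitivity (\sum_(i : 'I_m) (\sum_(j : 'I_m) (if (i < j)%N && P i j then F i j else 0) +
    \sum_(j : 'I_m) (if (j < i)%N && P j i then F j i else 0) +
    \sum_j (if j == i then F i j else 0))).
  by apply: eq_bigr => i _; rewrite big_mkcond -!big_split; apply: eq_bigr.
rewrite !big_split /= mulr2n; congr (_ + _ + _).
- by apply: eq_bigr => i _; rewrite [RHS]big_mkcond.
- by rewrite exchange_big /=; apply: eq_bigr => i _; rewrite [RHS]big_mkcond.
- by apply: eq_bigr => i _; rewrite -big_mkcond /= big_pred1_eq.
Qed.

Lemma same_block_sum n (x : 'I_(n + n) -> R) :
  \sum_(i : 'I_(n + n)) \sum_(j : 'I_(n + n) | (i < n)%N == (j < n)%N) x i * x j =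
  (\sum_(a < n) x (lshift n a)) ^+ 2 + (\sum_(a < n) x (rshift n a)) ^+ 2.
Proof.
rewrite big_split_ord /= !expr2 !mulr_suml; congr (_ + _); apply: eq_bigr => a _;
  rewrite big_mkcond big_split_ord /= mulr_sumr.
- rewrite [X in _ + X]big1 ?addr0 => [|c _]; last by rewrite lshift_lt rshift_ge.
  by apply: eq_bigr => c _; rewrite !lshift_lt.
- rewrite [X in X + _]big1 ?add0r => [|c _]; last by rewrite lshift_lt rshift_ge.
  by apply: eq_bigr => c _; rewrite !rshift_ge.
Qed.

Lemma internal_interaction n (s : conf n) :
  2 * (\sum_(i : 'I_(n + n)) \sum_(j : 'I_(n + n) |
        ((i < j)%N && ((i < n)%N == (j < n)%N)))
        spin R (s i) * spin R (s j))
  = (\sum_(a < n) spin R (s (lshift n a))) ^+ 2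
    + (\sum_(a < n) spin R (s (rshift n a))) ^+ 2 - (n%:R + n%:R).
Proof.
have := sum_sym_pairs (P := fun i j : 'I_(n + n) => (i < n)%N == (j < n)%N)
  (F := fun i j => spin R (s i) * spin R (s j)).
rewrite same_block_sum => ->; last 3 first.
- by move=> i j; rewrite eq_sym.
- by move=> i j; rewrite mulrC.
- by move=> i.
under [X in _ + X - _]eq_bigr do rewrite spin_sq.
by rewrite sumr_const card_ord natrD addrK mulr_natl.
Qed.

Lemma Ham_counts n (eps : R) (s : conf n) :
  Ham eps 0 s = energy n%:R eps (plus1 s)%:R (plus2 s)%:R (plus12 s)%:R.
Proof.
rewrite /Ham /energy mul0r subr0.
have := internal_interaction s; rewrite sum_spin_prod !sum_spin.
set T := (\sum_(i < n + n) _) => hT.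
have -> : T = (2 * T) / 2 by field.
by rewrite hT /plus1 /plus2 /plus12; field.
Qed.
End Energy.

Section RealBounds.
Variable R : realFieldType.

(* Energy of an edge configuration, centred at the symmetric point:
   the quadratic loss dominates the linear cross term. *)
Lemma quad_even_bound (t e : R) :
  (t = 0 \/ 2 <= t \/ t <= -2) -> -1 <= e -> e <= 1 -> - t ^+ 2 / 2 + e * t <= 0.
Proof. by move=> [->|[h|h]] *; nra. Qed.

Lemma quad_odd_bound (t e : R) :
  (t = 1 \/ t = -1 \/ 3 <= t \/ t <= -3) -> -1 <= e -> e <= 1 ->
  - t ^+ 2 / 2 + e * t <= - 1 / 2 + `|e|.
Proof.
move=> ht h1 h2; case: (lerP 0 e) => he; [rewrite ger0_norm | rewrite ltr0_norm] => //;
  by case: ht => [->|[->|[h|h]]]; nra.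
Qed.

Lemma mul_le_bound (e c B : R) :
  -B <= c -> c <= B -> -1 <= e -> e <= 1 -> e * c <= B.
Proof.
move=> h1 h2 h3 h4.
have : 0 <= (1 + e) * (B - c) by apply: mulr_ge0; lra.
have : 0 <= (1 - e) * (B + c) by apply: mulr_ge0; lra.
nra.
Qed.

(* n even: a configuration with p1 = n/2 and 0 < p2 < n lies strictly above
   the critical level n - n^2/2. *)
Lemma even_midline_above (N e K Q A : R) :
  4 <= N -> 2 * K = N -> A <= K -> A <= Q -> K + Q <= N + A -> 0 <= A ->
  1 <= Q -> Q <= N - 1 -> -1 <= e -> e <= 1 ->
  N - N ^+ 2 / 2 < energy N e K Q A.
Proof.
move=> hN hK h1 h2 h3 h4 hQ1 hQ2 he1 he2; rewrite ltNge /energy; apply/negP.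
have hK' : K = N / 2 by rewrite -hK; field.
case: (lerP Q K) => hQK.
  have hec : e * (4 * A - 2 * K - 2 * Q + N) <= 2 * Q by apply: mul_le_bound; lra.
  by rewrite hK' in hec *; nra.
have hec : e * (4 * A - 2 * K - 2 * Q + N) <= 2 * N - 2 * Q by apply: mul_le_bound; lra.
by rewrite hK' in hec *; nra.
Qed.

(* n odd, eps >= 0: the two sides of the crossing p1 = (n-1)/2 -> (n+1)/2 lie
   strictly above n - (1 + n^2)/2 + eps unless p2 is 0 or n. *)
Lemma odd_pos_lower_above (N e K Q A : R) :
  3 <= N -> 2 * K + 1 = N -> A <= K -> N + 1 <= 2 * Q -> Q <= N - 1 ->
  0 <= e -> e <= 1 ->
  N - (1 + N ^+ 2) / 2 + e < energy N e K Q A.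
Proof.
move=> hN hK h1 hQ1 hQ2 he1 he2; rewrite ltNge /energy; apply/negP.
have hK' : 2 * K = N - 1 by lra.
have hec : e * (4 * A - 2 * K - 2 * Q + N + 1) <= 2 * N - 2 * Q.
  apply: le_trans (_ : e * (2 * N - 2 * Q) <= _); first by apply: ler_wpM2l => //; lra.
  have : 0 <= (1 - e) * (2 * N - 2 * Q) by apply: mulr_ge0; lra.
  nra.
by rewrite hK' in hec *; nra.
Qed.

Lemma odd_pos_upper_above (N e K Q A : R) :
  3 <= N -> 2 * K = N + 1 -> A <= Q -> 2 * Q + 1 <= N -> 1 <= Q ->
  0 <= e -> e <= 1 ->
  N - (1 + N ^+ 2) / 2 + e < energy N e K Q A.
Proof.
move=> hN hK h1 hQ1 hQ2 he1 he2; rewrite ltNge /energy; apply/negP.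
have hec : e * (4 * A - 2 * K - 2 * Q + N + 1) <= 2 * Q.
  apply: le_trans (_ : e * (2 * Q) <= _); first by apply: ler_wpM2l => //; lra.
  have : 0 <= (1 - e) * (2 * Q) by apply: mulr_ge0; lra.
  nra.
by rewrite hK in hec *; nra.
Qed.

Lemma odd_neg_upper_above (N e K Q A : R) :
  3 <= N -> 2 * K = N + 1 -> K + Q <= N + A -> N + 1 <= 2 * Q -> Q <= N - 1 ->
  -1 <= e -> e <= 0 ->
  N - (1 + N ^+ 2) / 2 - e < energy N e K Q A.
Proof.
move=> hN hK h1 hQ1 hQ2 he1 he2; rewrite ltNge /energy; apply/negP.
have hec : (- e) * (1 - (4 * A - 2 * K - 2 * Q + N)) <= 2 * N - 2 * Q.
  apply: le_trans (_ : (- e) * (2 * N - 2 * Q) <= _); first by apply: ler_wpM2l; lra.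
  have : 0 <= (1 + e) * (2 * N - 2 * Q) by apply: mulr_ge0; lra.
  nra.
by rewrite hK in hec *; nra.
Qed.

Lemma odd_neg_lower_above (N e K Q A : R) :
  3 <= N -> 2 * K + 1 = N -> 0 <= A -> 2 * Q + 1 <= N -> 1 <= Q ->
  -1 <= e -> e <= 0 ->
  N - (1 + N ^+ 2) / 2 - e < energy N e K Q A.
Proof.
move=> hN hK h1 hQ1 hQ2 he1 he2; rewrite ltNge /energy; apply/negP.
have hK' : 2 * K = N - 1 by lra.
have hec : (- e) * (1 - (4 * A - 2 * K - 2 * Q + N)) <= 2 * Q.
  apply: le_trans (_ : (- e) * (2 * Q) <= _); first by apply: ler_wpM2l; lra.
  have : 0 <= (1 + e) * (2 * Q) by apply: mulr_ge0; lra.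
  nra.
by rewrite hK' in hec *; nra.
Qed.

(* A configuration whose energy does not exceed that of the best
   block-constant configuration has both counts in {0, N}. *)
Lemma ground_counts (N e K Q A : R) :
  0 <= A -> A <= K -> A <= Q -> K + Q <= N + A -> K <= N -> Q <= N ->
  -1 <= e -> e <= 1 ->
  energy N e K Q A <= - N ^+ 2 + N - `|e| * N -> K * (K - N) = 0 /\ Q * (Q - N) = 0.
Proof.
move=> h1 h2 h3 h4 h5 h6 he1 he2; rewrite /energy => hE.
have hc : e * (4 * A - 2 * K - 2 * Q + N) <= `|e| * N.
  case: (lerP 0 e) => he.
    by rewrite ger0_norm //; apply: ler_wpM2l => //; lra.
  rewrite ltr0_norm //; have : 0 <= (- e) * (4 * A - 2 * K - 2 * Q + N + N).
    by apply: mulr_ge0; lra.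
  nra.
have hK : K * (K - N) <= 0 by apply: mulr_ge0_le0; lra.
have hQ : Q * (Q - N) <= 0 by apply: mulr_ge0_le0; lra.
have hs : 0 <= K * (K - N) + Q * (Q - N) by nra.
by split; apply/eqP; rewrite eq_le; apply/andP; split; lra.
Qed.
End RealBounds.

Lemma natr_le {R : realFieldType} (x y : nat) : (x <= y)%N -> x%:R <= y%:R :> R.
Proof. by rewrite ler_nat. Qed.

Section CountLandscape.
Variables (R : realFieldType) (n : nat) (eps : R).
Hypotheses (n_ge2 : (2 <= n)%N) (eps_ge : -1 <= eps) (eps_le : eps <= 1).

(* The critical level: the common energy of the elements of C*. *)
Definition Phi : R :=
  if ~~ odd n then n%:R - n%:R ^+ 2 / 2 else n%:R - (1 + n%:R ^+ 2) / 2 + `|eps|.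

Definition Ecount (p1 p2 a : nat) : R := energy n%:R eps p1%:R p2%:R a%:R.

Definition counts_eq (p1 p2 a k l m : nat) : Prop := p1 = k /\ p2 = l /\ a = m.

Definition crit (p1 p2 a : nat) : Prop :=
  if ~~ odd n then
    counts_eq p1 p2 a (n./2) 0 0 \/ counts_eq p1 p2 a 0 (n./2) 0 \/
    counts_eq p1 p2 a n (n./2) (n./2) \/ counts_eq p1 p2 a (n./2) n (n./2)
  else if 0 <= eps then
    counts_eq p1 p2 a (n.+1./2) 0 0 \/ counts_eq p1 p2 a 0 (n.+1./2) 0 \/
    counts_eq p1 p2 a n (n./2) (n./2) \/ counts_eq p1 p2 a (n./2) n (n./2)
  else
    counts_eq p1 p2 a (n./2) 0 0 \/ counts_eq p1 p2 a 0 (n./2) 0 \/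
    counts_eq p1 p2 a n (n.+1./2) (n.+1./2) \/ counts_eq p1 p2 a (n.+1./2) n (n.+1./2).

Lemma Cstar_crit (s : conf n) : Cstar eps s = crit (plus1 s) (plus2 s) (plus12 s).
Proof. by []. Qed.

Lemma crit_sym p1 p2 a : crit p1 p2 a <-> crit p2 p1 a.
Proof. by rewrite /crit /counts_eq; case: ifP => _; [|case: ifP => _]; intuition. Qed.

Lemma Ecount_sym p1 p2 a : Ecount p1 p2 a = Ecount p2 p1 a.
Proof. exact: energy_sym. Qed.

Lemma crit_energy p1 p2 a : crit p1 p2 a -> Ecount p1 p2 a = Phi.
Proof.
rewrite /crit /Phi /Ecount /energy /counts_eq; case: ifP => hodd.
  have hN : n./2%:R + n./2%:R = n%:R :> R by rewrite -natrD; congr _%:R; lia.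
  by case=> [[->[->->]]|[[->[->->]]|[[->[->->]]|[->[->->]]]]]; rewrite -hN; ring.
have hN : n./2%:R + n./2%:R + 1 = n%:R :> R by rewrite -natrD -(natrD _ _ 1); congr _%:R; lia.
have -> : n.+1./2 = (n./2).+1 by lia.
have hS : (n./2).+1%:R = n./2%:R + 1 :> R by rewrite natr1.
case: ifP => he; [rewrite ger0_norm // | rewrite ltr0_norm ?ltNge ?he //];
  by case=> [[->[->->]]|[[->[->->]]|[[->[->->]]|[->[->->]]]]]; rewrite -hN ?hS; ring.
Qed.

Let natr_le_sub1 (x y : nat) : (x < y)%N -> x%:R <= y%:R - 1 :> R.
Proof. by move=> h; rewrite lerBrDr natr1 ler_nat. Qed.

Let natr_double (k : nat) : 2 * k%:R = (k + k)%:R :> R.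
Proof. by rewrite natrD mulr_natl mulr2n. Qed.

(* On an edge (one block constant) the energy is a quadratic in the count k
   of the other block, maximised at k ~ n/2 where it equals Phi. *)
Lemma edge_profile_bound k (e : R) :
  (k <= n)%N -> `|e| = `|eps| -> -1 <= e -> e <= 1 ->
  - ((2 * k%:R - n%:R) ^+ 2 + n%:R ^+ 2) / 2 + n%:R + e * (2 * k%:R - n%:R) <= Phi.
Proof.
move=> hk he he1 he2; rewrite /Phi -he; set t : R := 2 * k%:R - n%:R.
have tE (m : nat) : (k + k = n + m)%N -> t = m%:R.
  by move=> h; rewrite /t natr_double h natrD; ring.
have tE' (m : nat) : (k + k + m = n)%N -> t = - m%:R.
  by move=> h; rewrite /t natr_double -h !natrD; ring.
have tge (m : nat) : (n + m <= k + k)%N -> m%:R <= t.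
  by move=> h; rewrite /t natr_double lerBrDl -natrD ler_nat.
have tle (m : nat) : (k + k + m <= n)%N -> t <= - m%:R.
  by move=> h; have := natr_le (R := R) h; rewrite /t !natrD; lra.
case: ifP => hodd.
  suff ht : t = 0 \/ 2 <= t \/ t <= -2 by have := quad_even_bound ht he1 he2; lra.
  have : (k + k = n + 0 \/ n + 2 <= k + k \/ k + k + 2 <= n)%N by lia.
  by case=> [/tE|[/tge|/tle]]; auto.
suff ht : t = 1 \/ t = -1 \/ 3 <= t \/ t <= -3 by have := quad_odd_bound ht he1 he2; lra.
have : (k + k = n + 1 \/ k + k + 1 = n \/ n + 3 <= k + k \/ k + k + 3 <= n)%N by lia.
by case=> [/tE|[/tE'|[/tge|/tle]]]; auto.
Qed.

Lemma edge_counts_bound k : (k <= n)%N ->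
  [/\ Ecount k 0 0 <= Phi, Ecount 0 k 0 <= Phi, Ecount n k k <= Phi & Ecount k n k <= Phi].
Proof.
move=> hk.
have hpos := edge_profile_bound hk (erefl _) eps_ge eps_le.
have hneg : - ((2 * k%:R - n%:R) ^+ 2 + n%:R ^+ 2) / 2 + n%:R
    + (- eps) * (2 * k%:R - n%:R) <= Phi.
  by apply: edge_profile_bound; rewrite ?normrN //; [rewrite lerNr opprK | rewrite lerNl].
have e1 : Ecount k 0 0 = - ((2 * k%:R - n%:R) ^+ 2 + n%:R ^+ 2) / 2 + n%:R
    + eps * (2 * k%:R - n%:R) by rewrite /Ecount /energy; ring.
have e3 : Ecount n k k = - ((2 * k%:R - n%:R) ^+ 2 + n%:R ^+ 2) / 2 + n%:R
    + (- eps) * (2 * k%:R - n%:R) by rewrite /Ecount /energy; ring.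
by split; rewrite ?(Ecount_sym 0) ?(Ecount_sym k n) ?e1 ?e3.
Qed.

Lemma crossing_even k q a a' : ~~ odd n -> (k + k = n)%N ->
  valid_counts n k q a -> valid_counts n k.+1 q a' -> Ecount k q a <= Phi ->
  crit k q a \/ crit k.+1 q a'.
Proof.
move=> hodd hk /and5P[v1 v2 v3 v4 v5] /and5P[w1 w2 w3 w4 w5] hE.
rewrite /crit /counts_eq hodd (_ : n./2 = k); last by lia.
case: (ltnP n 4) => hn4.
  have : (q = 0 \/ q = 1 \/ q = 2)%N by lia.
  by case=> [hq|[hq|hq]]; [left; left | right; right; right; left |
    left; right; right; right]; lia.
have : (q = 0 \/ q = n \/ 0 < q < n)%N by lia.
case=> [hq|[hq|/andP[hq1 hq2]]]; [left; left; lia | left; right; right; right; lia|].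
move: hE; rewrite leNgt /Phi hodd (even_midline_above (natr_le hn4)) //.
- by rewrite natr_double hk.
- exact: natr_le.
- exact: natr_le.
- by rewrite -!natrD natr_le.
- by rewrite ler1n.
- exact: natr_le_sub1.
Qed.

Lemma crossing_odd k q a a' : odd n -> (k + k + 1 = n)%N ->
  valid_counts n k q a -> valid_counts n k.+1 q a' ->
  Ecount k q a <= Phi -> Ecount k.+1 q a' <= Phi ->
  crit k q a \/ crit k.+1 q a'.
Proof.
move=> hodd hk /and5P[v1 v2 v3 v4 v5] /and5P[w1 w2 w3 w4 w5] hE hE'.
rewrite /crit /counts_eq hodd.
have [-> ->] : n./2 = k /\ n.+1./2 = k.+1 by split; lia.
have hN3 : (3 : R) <= n%:R by apply: (natr_le (x := 3)); lia.
have hK : 2 * k%:R + 1 = n%:R :> R by rewrite natr_double natr1 -hk addn1.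
have hS : k.+1%:R = k%:R + 1 :> R by rewrite natr1.
have hK' : 2 * k.+1%:R = n%:R + 1 :> R by rewrite hS; lra.
rewrite /Phi hodd /= in hE hE'.
case: (lerP 0 eps) => he.
  rewrite ger0_norm // in hE hE'; case: (ltnP n (q + q)) => hq.
    have [hqn|hqn] : (q = n \/ q < n)%N by lia.
      by left; right; right; right; lia.
    move: hE; rewrite leNgt (odd_pos_lower_above hN3 hK) //.
    - exact: natr_le.
    - by rewrite natr_double natr1 ler_nat.
    - exact: natr_le_sub1.
  have [hq0|hq1] : (q = 0 \/ 0 < q)%N by lia.
    by right; left; lia.
  move: hE'; rewrite leNgt (odd_pos_upper_above hN3 hK') //.
  - exact: natr_le.
  - by rewrite natr_double natr1 ler_nat; lia.
  - by rewrite ler1n.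
rewrite ltr0_norm // in hE hE'; case: (ltnP n (q + q)) => hq.
  have [hqn|hqn] : (q = n \/ q < n)%N by lia.
    by right; right; right; right; lia.
  move: hE'; rewrite leNgt (odd_neg_upper_above hN3 hK') ?(ltW he) //.
  - by rewrite -!natrD natr_le.
  - by rewrite natr_double natr1 ler_nat.
  - exact: natr_le_sub1.
have [hq0|hq1] : (q = 0 \/ 0 < q)%N by lia.
  by left; left; lia.
move: hE; rewrite leNgt (odd_neg_lower_above hN3 hK) ?(ltW he) //.
- by rewrite natr_double natr1 ler_nat; lia.
- by rewrite ler1n.
Qed.

Lemma crossing_counts k q a a' :
  valid_counts n k q a -> valid_counts n k.+1 q a' ->
  Ecount k q a <= Phi -> Ecount k.+1 q a' <= Phi ->
  (k + k <= n)%N -> (n < k + k + 2)%N -> crit k q a \/ crit k.+1 q a'.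
Proof.
move=> v v' hE hE' h1 h2; case hodd: (odd n).
- by apply: crossing_odd => //; lia.
- by apply: crossing_even => //; [rewrite hodd | lia].
Qed.

Definition upper_half (p : nat) : bool := (n < p + p)%N.

Lemma upper_half_change k : upper_half k.+1 != upper_half k ->
  (k + k <= n)%N /\ (n < k + k + 2)%N.
Proof. by rewrite /upper_half; case: (ltnP n (k + k)); case: ltnP => //= *; lia. Qed.

Lemma upper_half_step1 k q a a' :
  valid_counts n k q a -> valid_counts n k.+1 q a' ->
  Ecount k q a <= Phi -> Ecount k.+1 q a' <= Phi ->
  ~ crit k q a -> ~ crit k.+1 q a' -> upper_half k.+1 = upper_half k.
Proof.
move=> v v' hE hE' c c'.
case: (eqVneq (upper_half k.+1) (upper_half k)) => // /upper_half_change [h1 h2].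
by case: (crossing_counts v v' hE hE' h1 h2).
Qed.

Lemma upper_half_step2 k q a a' :
  valid_counts n q k a -> valid_counts n q k.+1 a' ->
  Ecount q k a <= Phi -> Ecount q k.+1 a' <= Phi ->
  ~ crit q k a -> ~ crit q k.+1 a' -> upper_half k.+1 = upper_half k.
Proof.
rewrite !(valid_counts_sym _ q) !(Ecount_sym q) !(crit_sym q).
exact: upper_half_step1.
Qed.
End CountLandscape.

Section LowPaths.
Variables (R : realFieldType) (n : nat) (eps h : R).

Lemma path_max_le (L : R) (eta : conf n) p :
  path_max eps h eta p <= L <-> forall z, z \in eta :: p -> Ham eps h z <= L.
Proof.
elim: p => [|y p IH] /=.
  by split => [hl z|H]; [rewrite inE => /eqP -> | apply: H; rewrite inE].
rewrite ge_max; split.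
  case/andP => hy /IH hp z; rewrite !inE => /or3P[/eqP->|/eqP->|hz] //.
    by apply: hp; rewrite inE eqxx.
  by apply: hp; rewrite inE hz orbT.
move=> H; apply/andP; split; first by apply: H; rewrite !inE eqxx orbT.
by apply/IH => z; rewrite inE => /orP[/eqP->|hz]; apply: H; rewrite !inE ?eqxx ?hz ?orbT.
Qed.

Lemma path_max_ge (eta : conf n) p z :
  z \in eta :: p -> Ham eps h z <= path_max eps h eta p.
Proof. by move: z; apply/path_max_le. Qed.

Definition low_conn (L : R) (x y : conf n) : Prop :=
  exists p, path (@nbr n) x p /\ last x p = y /\
            forall z, z \in x :: p -> Ham eps h z <= L.

Lemma low_conn_trans (L : R) (x y z : conf n) :
  low_conn L x y -> low_conn L y z -> low_conn L x z.
Proof.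
move=> [p [hp [hl hm]]] [q [hq [hl' hm']]]; exists (p ++ q); split.
  by rewrite cat_path hp hl hq.
split; first by rewrite last_cat hl.
move=> w; rewrite -cat_cons mem_cat => /orP[hw|hw]; first exact: hm.
by apply: hm'; rewrite inE hw orbT.
Qed.

Definition between (x y z : conf n) : Prop := forall v, x v = y v -> z v = x v.

Definition set_vertex (x : conf n) (v : 'I_(n + n)) (b : bool) : conf n :=
  [ffun w => if w == v then b else x w].

Lemma nbr_set_vertex (x : conf n) v b : x v != b -> nbr x (set_vertex x v b).
Proof.
move=> hv; rewrite /nbr (_ : [set w | x w != _] = [set v]) ?cards1 //.
apply/setP => w; rewrite !inE ffunE; case: (eqVneq w v) => [->|] //.
by rewrite eqxx.
Qed.

(* If the whole box spanned by x and y lies below L, then flipping the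
   differing vertices one at a time joins x to y below L. *)
Lemma box_conn (L : R) (x y : conf n) :
  (forall z, between x y z -> Ham eps h z <= L) -> low_conn L x y.
Proof.
move: {2}#|[set v | x v != y v]| (erefl #|[set v | x v != y v]|) => d.
elim: d x => [|d IH] x hd hbox.
  have -> : x = y.
    apply/ffunP => v; apply/eqP; apply: contraT => hv.
    by have := cards0_eq hd; move/setP/(_ v); rewrite !inE hv.
  by exists [::]; split => //; split => // z; rewrite inE => /eqP ->; apply: hbox.
have /set0Pn [v] : [set v | x v != y v] != set0 by rewrite -cards_eq0 hd.
rewrite inE => hv; set x' := set_vertex x v (y v).
have x'E w : w != v -> x' w = x w by move=> hw; rewrite ffunE (negbTE hw).
have hd' : #|[set w | x' w != y w]| = d.
  have -> : [set w | x' w != y w] = [set w | x w != y w] :\ v.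
    apply/setP => w; rewrite !inE; case: (eqVneq w v) => [->|hw] /=.
      by rewrite ffunE !eqxx.
    by rewrite x'E.
  by move: hd; rewrite (cardsD1 v) inE hv => [[]].
have [p [hp [hl hm]]] : low_conn L x' y.
  apply: (IH x' hd') => z hz; apply: hbox => w hw.
  have hwv : w != v by apply: contraNneq hv => <-; rewrite hw.
  by rewrite -(x'E w hwv); apply: hz; rewrite x'E.
exists (x' :: p); split; first by rewrite /= nbr_set_vertex.
split => // z; rewrite inE => /orP[/eqP ->|hz]; last exact: hm.
by apply: hbox.
Qed.
End LowPaths.

Lemma natr_root (R : realFieldType) (k n : nat) :
  (k%:R : R) * (k%:R - n%:R) = 0 -> k = 0%N \/ k = n.
Proof.
move/eqP; rewrite mulf_eq0 => /orP[|]; first by rewrite pnatr_eq0 => /eqP; left.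
by rewrite subr_eq0 eqr_nat => /eqP; right.
Qed.

Section Landscape.
Variables (R : realFieldType) (n : nat) (eps : R).
Hypotheses (n_ge2 : (2 <= n)%N) (eps_ge : -1 <= eps) (eps_le : eps <= 1).

Local Notation Phi := (Phi n eps).
Local Notation low_conn := (low_conn eps 0 Phi).

Definition on_edge (s : conf n) : Prop := exists b, const1 s b \/ const2 s b.

Lemma edge_energy (z : conf n) : on_edge z -> Ham eps 0 z <= Phi.
Proof.
move=> [b [h|h]]; rewrite Ham_counts; have /and5P[_ _ v3 v4 _] := counts_valid z.
- have := const1_counts h; case: b h => _ [-> ->];
    by case: (edge_counts_bound n_ge2 eps_ge eps_le v4).
- have := const2_counts h; case: b h => _ [-> ->];
    by case: (edge_counts_bound n_ge2 eps_ge eps_le v3).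
Qed.

(* Two configurations sharing a constant block are joined below Phi, since
   the whole box between them consists of edge configurations. *)
Lemma same_block_conn (u w : conf n) b :
  (const1 u b /\ const1 w b) \/ (const2 u b /\ const2 w b) -> low_conn u w.
Proof.
move=> H; apply: box_conn => z hz; apply: edge_energy; exists b.
by case: H => [[hu hw]|[hu hw]]; [left|right] => i; rewrite hz ?hu ?hw.
Qed.

Lemma edge_origin_conn (u : conf n) : on_edge u ->
  low_conn u (block_conf n false false) /\ low_conn (block_conf n false false) u.
Proof.
have both (x y : conf n) b :
    (const1 x b /\ const1 y b) \/ (const2 x b /\ const2 y b) ->
    low_conn x y /\ low_conn y x.
  by move=> H; split; apply: (same_block_conn (b := b)); case: H; tauto.
move=> [b [h|h]].
- have [h1 h2] := both u (block_conf n b false) b (or_introl (conj h (block_conf1 _ _))).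
  have [h3 h4] := both (block_conf n b false) (block_conf n false false) false
    (or_intror (conj (block_conf2 _ _) (block_conf2 _ _))).
  by split; [exact: low_conn_trans h1 h3 | exact: low_conn_trans h4 h2].
- have [h1 h2] := both u (block_conf n false b) b (or_intror (conj h (block_conf2 _ _))).
  have [h3 h4] := both (block_conf n false b) (block_conf n false false) false
    (or_introl (conj (block_conf1 _ _) (block_conf1 _ _))).
  by split; [exact: low_conn_trans h1 h3 | exact: low_conn_trans h4 h2].
Qed.

Lemma edge_conn (u w : conf n) : on_edge u -> on_edge w -> low_conn u w.
Proof.
move=> /edge_origin_conn [hu _] /edge_origin_conn [_ hw].
exact: low_conn_trans hu hw.
Qed.

(* Stable states are constant on both blocks: their energy is at most that
   of the best block-constant configuration. *)
Lemma stable_corner (s : conf n) : stable eps 0 s ->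
  (plus1 s = 0%N \/ plus1 s = n) /\ (plus2 s = 0%N \/ plus2 s = n).
Proof.
move=> hs.
have hb : Ham eps 0 s <= - n%:R ^+ 2 + n%:R - `|eps| * n%:R.
  case: (lerP 0 eps) => he.
    apply: le_trans (hs (block_conf n true true)) _.
    have [h1 h3] := const1_counts (@block_conf1 n true true).
    have [h2 _] := const2_counts (@block_conf2 n true true).
    by rewrite Ham_counts h1 h3 h2 /energy ger0_norm //; nra.
  apply: le_trans (hs (block_conf n true false)) _.
  have [h1 h3] := const1_counts (@block_conf1 n true false).
  have [h2 _] := const2_counts (@block_conf2 n true false).
  by rewrite Ham_counts h1 h3 h2 /energy ltr0_norm //; nra.
rewrite Ham_counts in hb; have /and5P[v1 v2 v3 v4 v5] := counts_valid s.
have v5' : (plus1 s)%:R + (plus2 s)%:R <= n%:R + (plus12 s)%:R :> R.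
  by rewrite -!natrD natr_le.
have [h1 h2] := ground_counts (ler0n _ _) (natr_le v1) (natr_le v2) v5'
  (natr_le v3) (natr_le v4) eps_ge eps_le hb.
by split; [exact: natr_root h1 | exact: natr_root h2].
Qed.

Definition phase (s : conf n) : bool * bool :=
  (upper_half n (plus1 s), upper_half n (plus2 s)).

Lemma phase_step (A B : conf n) : nbr A B -> Ham eps 0 A <= Phi -> Ham eps 0 B <= Phi ->
  ~ Cstar eps A -> ~ Cstar eps B -> phase A = phase B.
Proof.
rewrite !Cstar_crit !Ham_counts => hAB hA hB cA cB.
have vA := counts_valid A; have vB := counts_valid B.
have [v [hv hw]] := nbrP hAB; rewrite /phase.
case: (vertex_cases v) => [[i ev]|[i ev]]; rewrite ev in hv hw.
- have [e2 [e1|e1]] := flip1_counts hv hw; rewrite e2; congr pair.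
  + rewrite e1 e2 in vA hA cA *.
    exact: upper_half_step1 vB vA hB hA cB cA.
  + rewrite e1 -e2 in vB hB cB *; symmetry.
    exact: upper_half_step1 vA vB hA hB cA cB.
- have [e1 [e2|e2]] := flip2_counts hv hw; rewrite e1; congr pair.
  + rewrite e1 e2 in vA hA cA *.
    exact: upper_half_step2 vB vA hB hA cB cA.
  + rewrite e2 -e1 in vB hB cB *; symmetry.
    exact: upper_half_step2 vA vB hA hB cA cB.
Qed.

Lemma phase_path (x : conf n) p : path (@nbr n) x p ->
  (forall z, z \in x :: p -> Ham eps 0 z <= Phi) ->
  (forall z, z \in x :: p -> ~ Cstar eps z) -> phase (last x p) = phase x.
Proof.
elim: p x => [|y p IH] x //= /andP[hxy hp] hlow hC.
have hx : x \in x :: y :: p by exact: mem_head.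
have hy : y \in x :: y :: p by rewrite !inE eqxx orbT.
rewrite IH //; last 2 first.
- by move=> z hz; apply: hlow; rewrite inE hz orbT.
- by move=> z hz; apply: hC; rewrite inE hz orbT.
by symmetry; apply: phase_step; [| exact: hlow | exact: hlow | exact: hC | exact: hC].
Qed.

Lemma stable_phase_inj (s t : conf n) : stable eps 0 s -> stable eps 0 t ->
  phase s = phase t -> s = t.
Proof.
move=> /stable_corner [c1 c2] /stable_corner [d1 d2] [h1 h2].
have extreme_eq (p q : nat) : (p = 0 \/ p = n)%N -> (q = 0 \/ q = n)%N ->
    upper_half n p = upper_half n q -> p = q.
  have hnn : (n < n + n)%N by lia.
  by rewrite /upper_half; case=> -> [] ->; rewrite ?hnn.
have e1 := extreme_eq _ _ c1 d1 h1; have e2 := extreme_eq _ _ c2 d2 h2.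
have agree1 i : s (lshift n i) = t (lshift n i).
  case: c1 => h.
  - by rewrite ((plus1_const s).1 h) ((plus1_const t).1 _) // -e1.
  - by rewrite ((plus1_const s).2 h) ((plus1_const t).2 _) // -e1.
have agree2 i : s (rshift n i) = t (rshift n i).
  case: c2 => h.
  - by rewrite ((plus2_const s).1 h) ((plus2_const t).1 _) // -e2.
  - by rewrite ((plus2_const s).2 h) ((plus2_const t).2 _) // -e2.
by apply/ffunP => v; case: (vertex_cases v) => [[i ->]|[i ->]].
Qed.

Lemma stable_on_edge (s : conf n) : stable eps 0 s -> on_edge s.
Proof.
move=> /stable_corner [[/(plus1_const s).1 h | /(plus1_const s).2 h] _].
- by exists false; left.
- by exists true; left.
Qed.

Lemma Cstar_on_edge (z : conf n) : Cstar eps z -> on_edge z.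
Proof.
move=> hz; suff extreme : plus1 z = 0%N \/ plus1 z = n \/ plus2 z = 0%N \/ plus2 z = n.
  case: extreme => [h|[h|[h|h]]].
  - by exists false; left; exact: (plus1_const z).1.
  - by exists true; left; exact: (plus1_const z).2.
  - by exists false; right; exact: (plus2_const z).1.
  - by exists true; right; exact: (plus2_const z).2.
move: hz; rewrite Cstar_crit /crit /counts_eq; case: ifP => _; [|case: ifP => _];
  case=> [[_[->_]]|[[->_]|[[->_]|[_[->_]]]]]; tauto.
Qed.

Lemma Cstar_energy (z : conf n) : Cstar eps z -> Ham eps 0 z = Phi.
Proof. by rewrite Cstar_crit Ham_counts; apply: crit_energy. Qed.

Section Gate.
Variables s1 s2 : conf n.
Hypotheses (s1_stable : stable eps 0 s1) (s2_stable : stable eps 0 s2)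
  (s1_neq_s2 : s1 <> s2).

(* Every path between the two stable states that stays below Phi meets C*:
   otherwise the phase would be preserved, forcing s1 = s2. *)
Lemma low_path_meets_Cstar p : is_path s1 s2 p ->
  path_max eps 0 s1 p <= Phi -> exists2 z, z \in s1 :: p & Cstar eps z.
Proof.
move=> [hp hl] /path_max_le hlow; apply: NNPP => hno; apply: s1_neq_s2.
apply: stable_phase_inj s1_stable s2_stable _.
by rewrite -hl (phase_path hp hlow) // => z hz hcz; apply: hno; exists z.
Qed.

Lemma Phi_le_path_max q : is_path s1 s2 q -> Phi <= path_max eps 0 s1 q.
Proof.
move=> hq; rewrite leNgt; apply/negP => hlt.
have [z hz /Cstar_energy hE] := low_path_meets_Cstar hq (ltW hlt).
by have := le_lt_trans (path_max_ge eps 0 hz) hlt; rewrite hE ltxx.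
Qed.

Lemma stable_low_conn : low_conn s1 s2.
Proof. exact: edge_conn (stable_on_edge s1_stable) (stable_on_edge s2_stable). Qed.

(* Every element of C* is a minimal saddle: concatenate low paths from s1 to
   it and from it to s2. *)
Lemma Cstar_saddle z : Cstar eps z -> min_saddle eps 0 s1 s2 z.
Proof.
move=> hz; have ez := Cstar_on_edge hz.
have [p1 [hp1 [hl1 hm1]]] := edge_conn (stable_on_edge s1_stable) ez.
have [p2 [hp2 [hl2 hm2]]] := edge_conn ez (stable_on_edge s2_stable).
have hmax : path_max eps 0 s1 (p1 ++ p2) <= Phi.
  apply/path_max_le => w; rewrite -cat_cons mem_cat => /orP[hw|hw]; first exact: hm1.
  by apply: hm2; rewrite inE hw orbT.
have hzin : z \in s1 :: (p1 ++ p2) by rewrite -cat_cons mem_cat -hl1 mem_last.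
exists (p1 ++ p2); split; [split; first split | split => //].
- by rewrite cat_path hp1 hl1 hp2.
- by rewrite last_cat hl1 hl2.
- by move=> q hq; apply: le_trans hmax (Phi_le_path_max hq).
- by apply/eqP; rewrite eq_le path_max_ge // (Cstar_energy hz).
Qed.

(* Every optimal path stays below Phi, hence meets C*. *)
Lemma optimal_path_meets_Cstar p : opt_path eps 0 s1 s2 p ->
  exists2 z, z \in s1 :: p & Cstar eps z.
Proof.
move=> [hp hopt]; apply: low_path_meets_Cstar hp _.
have [r [hr [hrl hrm]]] := stable_low_conn.
by apply: le_trans (hopt r (conj hr hrl)) _; apply/path_max_le.
Qed.
End Gate.
End Landscape.

Close Scope ring_scope.

Theorem theorem2p3 (R : realFieldType) (n : nat) (eps : R) :
  (2 <= n)%N -> (-1 <= eps)%R -> (eps <= 1)%R ->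
  forall s1 s2 : conf n,
    stable eps 0%R s1 -> stable eps 0%R s2 -> s1 <> s2 ->
    is_gate eps 0%R s1 s2 (Cstar eps).
Proof.
move=> n_ge2 eps_ge eps_le s1 s2 s1_stable s2_stable s1_neq_s2; split.
- by move=> z; apply: Cstar_saddle.
- by move=> p; apply: optimal_path_meets_Cstar.
Qed.
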